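(* Consider the two-player continuous time stochastic game with $S=\{1,2\}$, $A^1(1)=A^2(1)=\{1,2\}$, $A^1(2)=A^2(2)=\{1\}$, rewards $(r^1,r^2)$ and transition rates as follows: at state $1$, $(a^1,a^2)=(1,1)$ gives rewards $(4,9)$ and $\mu(2,1,1,1)=0$; $(1,2)$ gives $(6,3)$ and $\mu(2,1,1,2)=1$; $(2,1)$ gives $(5,4)$ and $\mu(2,1,2,1)=0$; $(2,2)$ gives $(4,5)$ and $\mu(2,1,2,2)=1$; at state $2$ the single action pair gives $(6,7)$ and $\mu(1,2,1,1)=1$. Then for every discount rate $\alpha>0$ the game has a unique stationary $\alpha$-discounted Nash equilibrium, namely $f^*_\alpha(1)=\left(\frac{4+\alpha}{12+7\alpha},\frac{8+6\alpha}{12+7\alpha}\right)$, $g^*_\alpha(1)=(\frac23,\frac13)$. Consequently this game (in which transition rates depend only on player 2's actions) has no stationary Blackwell-Nash equilibrium.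
   Context: A two-player continuous time stochastic game consists of a finite state set $S$, finite nonempty action sets $A^1(s),A^2(s)$, reward rates $r^i(s,a^1,a^2)$ ($i=1,2$), and transition rates $\mu(s',s,a^1,a^2)\ge0$ from $s$ to $s'\ne s$, with $\mu(s,s,a^1,a^2)=-\sum_{s'\ne s}\mu(s',s,a^1,a^2)$. Stationary strategies $f,g$ assign to each state a probability distribution on $A^1(s)$, resp. $A^2(s)$. For a stationary pair, $r^i(s,f,g)=\sum_{a^1,a^2}f(s,a^1)g(s,a^2)r^i(s,a^1,a^2)$ and $Q(f,g)$ is the generator matrix with $Q(f,g)_{ss'}=\sum_{a^1,a^2}f(s,a^1)g(s,a^2)\mu(s',s,a^1,a^2)$. For $\alpha>0$ the $\alpha$-discounted payoff is $v^i_\alpha(s,f,g)=E^s_{f,g}\int_0^\infty e^{-\alpha t}r^i(s_t,f,g)\,dt$, i.e. $v^i_\alpha(f,g)=(\alpha I-Q(f,g))^{-1}r^i(f,g)$. A stationary pair $(f^*,g^* )$ is an $\alpha$-discounted Nash equilibrium if for all $s$, $v^1_\alpha(s,f^*,g^* )\ge v^1_\alpha(s,f,g^* )$ for all stationary $f$ and $v^2_\alpha(s,f^*,g^* )\ge v^2_\alpha(s,f^*,g)$ for all stationary $g$. It is a Blackwell-Nash equilibrium (BNE) if there is $\alpha_0>0$ such that it is an $\alpha$-discounted Nash equilibrium for all $\alpha\in(0,\alpha_0]$. *)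

From HB Require Import structures.
From mathcomp Require Import all_boot all_order all_algebra.
Set Implicit Arguments. Unset Strict Implicit. Unset Printing Implicit Defensive.
Import Order.TTheory GRing.Theory Num.Theory.
Local Open Scope ring_scope.

Section Game.
Variables (R : realFieldType) (n m : nat).

(* mu s' s a1 a2 = transition rate from s to s' (used only for s' <> s). *)
Record game := Game {
  A1 : 'I_n -> {set 'I_m};
  A2 : 'I_n -> {set 'I_m};
  rw1 : 'I_n -> 'I_m -> 'I_m -> R;
  rw2 : 'I_n -> 'I_m -> 'I_m -> R;
  mu : 'I_n -> 'I_n -> 'I_m -> 'I_m -> R }.

Definition strategy := 'I_n -> 'I_m -> R.

Definition stationary (A : 'I_n -> {set 'I_m}) (f : strategy) : Prop :=
  forall s, (forall a, 0 <= f s a) /\ (forall a, a \notin A s -> f s a = 0)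
            /\ \sum_(a in A s) f s a = 1.

Definition rew (G : game) (r : 'I_n -> 'I_m -> 'I_m -> R) (f g : strategy)
  : 'cV[R]_n :=
  \col_s \sum_(a1 in A1 G s) \sum_(a2 in A2 G s) f s a1 * g s a2 * r s a1 a2.

Definition muD (G : game) (s' s : 'I_n) (a1 a2 : 'I_m) : R :=
  if s' == s then - \sum_(t | t != s) mu G t s a1 a2 else mu G s' s a1 a2.

Definition Qgen (G : game) (f g : strategy) : 'M[R]_n :=
  \matrix_(s, s') \sum_(a1 in A1 G s) \sum_(a2 in A2 G s)
      f s a1 * g s a2 * muD G s' s a1 a2.

Definition disc_payoff (G : game) (r : 'I_n -> 'I_m -> 'I_m -> R)
  (alpha : R) (f g : strategy) : 'cV[R]_n :=
  invmx (alpha%:M - Qgen G f g) *m rew G r f g.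

Definition disc_nash (G : game) (alpha : R) (f g : strategy) : Prop :=
  stationary (A1 G) f /\ stationary (A2 G) g /\
  (forall s f', stationary (A1 G) f' ->
     disc_payoff G (rw1 G) alpha f' g s ord0 <= disc_payoff G (rw1 G) alpha f g s ord0) /\
  (forall s g', stationary (A2 G) g' ->
     disc_payoff G (rw2 G) alpha f g' s ord0 <= disc_payoff G (rw2 G) alpha f g s ord0).

Definition blackwell_nash (G : game) (f g : strategy) : Prop :=
  exists alpha0, 0 < alpha0 /\
    forall alpha, 0 < alpha -> alpha <= alpha0 -> disc_nash G alpha f g.

End Game.

(* The example: state 1 = ord 0, state 2 = ord 1; action 1 = ord 0, action 2 = ord 1. *)
Section Example.
Variable R : realFieldType.

Definition ex_A (s : 'I_2) : {set 'I_2} :=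
  if val s == 0%N then setT else [set ord0].

Definition ex_r1 (s a1 a2 : 'I_2) : R :=
  if val s == 0%N then
    (if val a1 == 0%N then (if val a2 == 0%N then 4 else 6)
     else (if val a2 == 0%N then 5 else 4))
  else 6.

Definition ex_r2 (s a1 a2 : 'I_2) : R :=
  if val s == 0%N then
    (if val a1 == 0%N then (if val a2 == 0%N then 9 else 3)
     else (if val a2 == 0%N then 4 else 5))
  else 7.

Definition ex_mu (s' s a1 a2 : 'I_2) : R :=
  if val s == 0%N then (if val a2 == 0%N then 0 else 1) else 1.

Definition ex_game : game R 2 2 := Game ex_A ex_A ex_r1 ex_r2 ex_mu.

Definition fstar (alpha : R) : strategy R 2 2 := fun s a =>
  if val s == 0%N then
    (if val a == 0%N then (4 + alpha) / (12 + 7 * alpha)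
     else (8 + 6 * alpha) / (12 + 7 * alpha))
  else (if val a == 0%N then 1 else 0).

Definition gstar : strategy R 2 2 := fun s a =>
  if val s == 0%N then (if val a == 0%N then 2 / 3 else 1 / 3)
  else (if val a == 0%N then 1 else 0).

End Example.

From mathcomp Require Import all_boot all_order all_algebra.
From mathcomp Require Import ring lra.
From Stdlib Require Import FunctionalExtensionality.
Import Order.TTheory GRing.Theory Num.Theory.
Local Open Scope ring_scope.

(* Transitions depend only on player 2, so player 1 simply maximises the
   reward at state 1; against player 2's weight q on action 1 the advantage of
   action 1 is 2 - 3q, which forces q = 2/3.  Player 2's payoff is a Moebius
   function of its own weight y whose monotonicity has the sign of
   (12 + 7 alpha) p - (4 + alpha), where p is player 1's weight on action 1;
   indifference forces p = (4 + alpha) / (12 + 7 alpha).  Since this value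
   changes with alpha, no stationary pair is an equilibrium for all small
   alpha. *)

Lemma ord2P (i : 'I_2) : i = ord0 \/ i = ord_max.
Proof. by case: i => [[|[|k]] Hk]; [left|right|by []]; apply: val_inj. Qed.

Lemma big_ord2 {V : nmodType} (F : 'I_2 -> V) : \sum_(i < 2) F i = F ord0 + F ord_max.
Proof. by rewrite big_ord_recl big_ord1; congr (_ + F _); apply: val_inj. Qed.

Lemma big_ord2_neq0 {V : nmodType} (F : 'I_2 -> V) : \sum_(i | i != ord0) F i = F ord_max.
Proof. by rewrite big_mkcond big_ord2 /= add0r. Qed.

Lemma big_ord2_neqmax {V : nmodType} (F : 'I_2 -> V) : \sum_(i | i != ord_max) F i = F ord0.
Proof. by rewrite big_mkcond big_ord2 /= addr0. Qed.

Lemma invmx2_mul {F : fieldType} (M : 'M[F]_2) (x : 'cV[F]_2) :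
  let d := M ord0 ord0 * M ord_max ord_max - M ord0 ord_max * M ord_max ord0 in
  d != 0 ->
  invmx M *m x = \col_i (if i == ord0
      then (M ord_max ord_max * x ord0 ord0 - M ord0 ord_max * x ord_max ord0) / d
      else (M ord0 ord0 * x ord_max ord0 - M ord_max ord0 * x ord0 ord0) / d).
Proof.
move=> d dn0; set w := \col_i _.
pose B : 'M[F]_2 := \matrix_(i, j)
  ((if i == ord0 then (if j == ord0 then M ord_max ord_max else - M ord0 ord_max)
   else (if j == ord0 then - M ord_max ord0 else M ord0 ord0)) / d : F).
have MB : M *m B = 1%:M.
  apply/matrixP => i j; rewrite !mxE big_ord2 !mxE.
  by case: (ord2P i) => ->; case: (ord2P j) => -> /=; rewrite /d; field.
have Mw : M *m w = x.
  apply/matrixP => i j; rewrite !mxE big_ord2 !mxE [j]ord1.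
  by case: (ord2P i) => -> /=; rewrite /d; field.
by rewrite -Mw mulKmx //; case: (mulmx1_unit MB).
Qed.

Lemma discounted_value2 {R : numFieldType} {alpha lam mu : R} {Q : 'M[R]_2} {r : 'cV[R]_2} :
  0 < alpha -> 0 <= lam -> 0 <= mu ->
  Q ord0 ord0 = - lam -> Q ord0 ord_max = lam -> Q ord_max ord0 = mu -> Q ord_max ord_max = - mu ->
  forall s, (invmx (alpha%:M - Q) *m r) s ord0 =
    (if s == ord0 then (alpha + mu) * r ord0 ord0 + lam * r ord_max ord0
     else mu * r ord0 ord0 + (alpha + lam) * r ord_max ord0) / (alpha * (alpha + lam + mu)).
Proof.
move=> a0 l0 m0 Q00 Q01 Q10 Q11 s.
have det_pos : 0 < alpha * (alpha + lam + mu)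
  by rewrite mulr_gt0 // (ltr_wpDr m0 (ltr_wpDr l0 a0)).
rewrite invmx2_mul !mxE ?Q00 ?Q01 ?Q10 ?Q11 /= ?mulr1n ?mulr0n; last first.
  by rewrite (_ : _ - _ = alpha * (alpha + lam + mu)) ?gt_eqF //; ring.
by case: (ord2P s) => -> /=; congr (_ / _); ring.
Qed.

Lemma linear_best_response {R : realDomainType} {p a : R} : 0 <= p <= 1 ->
  (forall x, 0 <= x <= 1 -> (x - p) * a <= 0) -> (0 < a -> p = 1) /\ (a < 0 -> p = 0).
Proof.
move=> /andP[p0 p1] best; split=> a_sgn.
- have := best 1; rewrite lexx ler01 pmulr_lle0 // => /(_ isT) ?; lra.
- have := best 0; rewrite lexx ler01 nmulr_lle0 // => /(_ isT) ?; lra.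
Qed.

Section Example.
Context {R : realFieldType}.
Local Notation G := (ex_game R).

Definition ex_mix (x : R) : strategy R 2 2 := fun s a =>
  if val s == 0%N then (if val a == 0%N then x else 1 - x)
  else (if val a == 0%N then 1 else 0).

Definition ex_pstar (alpha : R) : R := (4 + alpha) / (12 + 7 * alpha).

Lemma ex_mix_inj : injective ex_mix.
Proof. by move=> x y /(congr1 (fun f => f ord0 ord0)). Qed.

Lemma fstarE (alpha : R) : 0 <= alpha -> fstar alpha = ex_mix (ex_pstar alpha).
Proof.
move=> a0; apply: functional_extensionality => s; apply: functional_extensionality => a.
rewrite /fstar /ex_mix /ex_pstar.
by case: (ord2P s) => -> //=; case: (ord2P a) => -> //=; field; rewrite gt_eqF //; lra.
Qed.

Lemma gstarE : gstar R = ex_mix (2 / 3).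
Proof.
apply: functional_extensionality => s; apply: functional_extensionality => a.
by rewrite /gstar /ex_mix; case: (ord2P s) => -> //=; case: (ord2P a) => -> //=; field.
Qed.

Lemma ex_pstar_inj {alpha beta : R} : 0 <= alpha -> 0 <= beta ->
  ex_pstar alpha = ex_pstar beta -> alpha = beta.
Proof.
move=> a0 b0; rewrite /ex_pstar => /eqP.
have pos (c : R) : 0 <= c -> 12 + 7 * c != 0 by move=> ?; rewrite gt_eqF //; lra.
rewrite eqr_div ?pos // => /eqP E.
have : (beta - alpha) * 16 = 0 by rewrite -(subrr ((4 + beta) * (12 + 7 * alpha))) -{1}E; ring.
by move/eqP; rewrite mulf_eq0 subr_eq0 pnatr_eq0 orbF => /eqP.
Qed.

Lemma big_ex_A0 (F : 'I_2 -> R) : \sum_(a in ex_A ord0) F a = F ord0 + F ord_max.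
Proof. by rewrite (eq_bigl xpredT) ?big_ord2 // => i; rewrite in_setT. Qed.

Lemma big_ex_A1 (F : 'I_2 -> R) : \sum_(a in ex_A ord_max) F a = F ord0.
Proof. exact: big_set1. Qed.

Lemma stationary_exE (f : strategy R 2 2) :
  stationary ex_A f <-> exists2 x : R, 0 <= x <= 1 & f = ex_mix x.
Proof.
split=> [stat_f | [x /andP[x0 x1] ->] s].
- have [f0 [_ sum_f0]] := stat_f ord0; have [_ [out_f1 sum_f1]] := stat_f ord_max.
  rewrite big_ex_A0 in sum_f0; rewrite big_ex_A1 in sum_f1.
  have f11 : f ord_max ord_max = 0 by apply: out_f1; rewrite in_set1.
  exists (f ord0 ord0); first by have := f0 ord0; have := f0 ord_max; lra.
  apply: functional_extensionality => s; apply: functional_extensionality => a.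
  by rewrite /ex_mix; case: (ord2P s) => ->; case: (ord2P a) => -> //=; lra.
- rewrite /ex_mix; case: (ord2P s) => -> /=; split.
  + by move=> a; case: (ord2P a) => -> //=; lra.
  + by split=> [a|]; rewrite ?in_setT // big_ex_A0 /=; lra.
  + by move=> a; case: (ord2P a) => -> //=; lra.
  + by split=> [a|]; rewrite ?big_ex_A1 //; case: (ord2P a) => -> //; rewrite in_set1.
Qed.

Lemma Qgen_ex_mix (p q : R) : let Q := Qgen G (ex_mix p) (ex_mix q) in
  [/\ Q ord0 ord0 = - (1 - q), Q ord0 ord_max = 1 - q,
      Q ord_max ord0 = 1 & Q ord_max ord_max = - 1].
Proof.
rewrite /= !mxE /= !big_ex_A0 !big_ex_A1 /muD /= !big_ord2_neq0 !big_ord2_neqmax /ex_mu /ex_mix /=.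
by split; ring.
Qed.

Lemma rew_ex_mix (r : 'I_2 -> 'I_2 -> 'I_2 -> R) (p q : R) :
  let rho := rew G r (ex_mix p) (ex_mix q) in
  rho ord0 ord0 = p * q * r ord0 ord0 ord0 + p * (1 - q) * r ord0 ord0 ord_max
                  + (1 - p) * q * r ord0 ord_max ord0
                  + (1 - p) * (1 - q) * r ord0 ord_max ord_max /\
  rho ord_max ord0 = r ord_max ord0 ord0.
Proof.
rewrite /= !mxE /= big_ex_A0 !big_ex_A0 big_ex_A1 !big_ex_A1 /ex_mix /=.
by split; ring.
Qed.

Lemma payoff_ex_mix (r : 'I_2 -> 'I_2 -> 'I_2 -> R) (alpha p q : R) (s : 'I_2) :
  0 < alpha -> q <= 1 ->
  let rho := rew G r (ex_mix p) (ex_mix q) in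
  disc_payoff G r alpha (ex_mix p) (ex_mix q) s ord0 =
    (if s == ord0 then (alpha + 1) * rho ord0 ord0 + (1 - q) * rho ord_max ord0
     else rho ord0 ord0 + (alpha + 1 - q) * rho ord_max ord0)
    / (alpha * (alpha + 2 - q)).
Proof.
move=> a0 q1 rho; have [Q00 Q01 Q10 Q11] := Qgen_ex_mix p q.
have lam0 : 0 <= 1 - q by lra.
rewrite /disc_payoff (discounted_value2 a0 lam0 ler01 Q00 Q01 Q10 Q11).
by case: (s == ord0); congr (_ / _); ring.
Qed.

Lemma payoff1_gap (alpha p q x : R) (s : 'I_2) : 0 < alpha -> q <= 1 ->
  disc_payoff G (rw1 G) alpha (ex_mix x) (ex_mix q) s ord0
  - disc_payoff G (rw1 G) alpha (ex_mix p) (ex_mix q) s ord0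
  = (x - p) * (2 - 3 * q)
    * ((if s == ord0 then alpha + 1 else 1) / (alpha * (alpha + 2 - q))).
Proof.
move=> a0 q1; rewrite !payoff_ex_mix //.
have [-> ->] := rew_ex_mix (rw1 G) x q; have [-> ->] := rew_ex_mix (rw1 G) p q.
by rewrite /= /ex_r1 /=; case: ifP => _; field; rewrite ?gt_eqF //; lra.
Qed.

Lemma payoff2_gap (alpha p q y : R) (s : 'I_2) : 0 < alpha -> q <= 1 -> y <= 1 ->
  disc_payoff G (rw2 G) alpha (ex_mix p) (ex_mix y) s ord0
  - disc_payoff G (rw2 G) alpha (ex_mix p) (ex_mix q) s ord0
  = (y - q) * ((12 + 7 * alpha) * p - (4 + alpha))
    * ((if s == ord0 then alpha + 1 else 1)
       / (alpha * (alpha + 2 - y) * (alpha + 2 - q))).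
Proof.
move=> a0 q1 y1; rewrite !payoff_ex_mix //.
have [-> ->] := rew_ex_mix (rw2 G) p y; have [-> ->] := rew_ex_mix (rw2 G) p q.
by rewrite /= /ex_r2 /=; case: ifP => _; field; rewrite ?gt_eqF //; lra.
Qed.

Lemma ex_mix_nash (alpha : R) : 0 < alpha ->
  disc_nash G alpha (ex_mix (ex_pstar alpha)) (ex_mix (2 / 3)).
Proof.
move=> a0; have pstar01 : 0 <= ex_pstar alpha <= 1.
  by apply/andP; split; [apply: divr_ge0 | rewrite ler_pdivrMr ?mul1r]; lra.
have q01 : 0 <= (2 / 3 : R) <= 1 by apply/andP; split; lra.
split; first by apply/stationary_exE; exists (ex_pstar alpha).
split; first by apply/stationary_exE; exists (2 / 3).
split=> s _ /stationary_exE[x /andP[_ x1] ->]; rewrite -subr_le0.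
- rewrite payoff1_gap //; last by lra.
  by rewrite (_ : 2 - 3 * (2 / 3) = 0 :> R) ?mulr0 ?mul0r //; field.
- rewrite payoff2_gap //; last by lra.
  by rewrite (_ : _ * ex_pstar alpha - _ = 0) ?mulr0 ?mul0r // /ex_pstar; field; lra.
Qed.

Lemma ex_nash_unique {alpha : R} {f g : strategy R 2 2} : 0 < alpha ->
  disc_nash G alpha f g -> f = ex_mix (ex_pstar alpha) /\ g = ex_mix (2 / 3).
Proof.
move=> a0 [/stationary_exE[p p01 ->] [/stationary_exE[q q01 ->] [nash1 nash2]]].
have /andP[q0 q1] := q01.
set K := (12 + 7 * alpha) * p - (4 + alpha).
have br1 (x : R) : 0 <= x <= 1 -> (x - p) * (2 - 3 * q) <= 0.
  move=> x01; have /(nash1 ord0) : stationary ex_A (ex_mix x) by apply/stationary_exE; exists x.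
  rewrite -subr_le0 payoff1_gap // pmulr_lle0 //.
  by apply: divr_gt0; [|apply: mulr_gt0]; lra.
have br2 (y : R) : 0 <= y <= 1 -> (y - q) * K <= 0.
  move=> /[dup] /andP[_ y1] y01.
  have /(nash2 ord0) : stationary ex_A (ex_mix y) by apply/stationary_exE; exists y.
  rewrite -subr_le0 payoff2_gap // pmulr_lle0 //.
  by apply: divr_gt0; [|apply: mulr_gt0; [apply: mulr_gt0|]]; lra.
have [p_eq1 p_eq0] := linear_best_response p01 br1.
have [q_eq1 q_eq0] := linear_best_response q01 br2.
have q23 : q = 2 / 3.
  case: (ltgtP q (2 / 3)) => // [q_lt | q_gt].
  - have p1 : p = 1 by apply: p_eq1; lra.
    have K_pos : 0 < K by rewrite /K p1; lra.
    by have := q_eq1 K_pos; lra.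
  - have p0 : p = 0 by apply: p_eq0; lra.
    have K_neg : K < 0 by rewrite /K p0; lra.
    by have := q_eq0 K_neg; lra.
have K0 : K = 0.
  by case: (ltgtP K 0) => // [/q_eq0 | /q_eq1]; lra.
split; congr ex_mix => //.
have d0 : 12 + 7 * alpha != 0 by rewrite gt_eqF //; lra.
apply: (mulIf d0); rewrite divfK // mulrC; apply/eqP.
by rewrite -subr_eq0 -/K K0.
Qed.

End Example.

Theorem mainTheorem5 (R : realFieldType) :
  (forall alpha : R, 0 < alpha ->
     disc_nash (ex_game R) alpha (fstar alpha) (gstar R) /\
     (forall f g : strategy R 2 2, disc_nash (ex_game R) alpha f g ->
        f = fstar alpha /\ g = gstar R)) /\
  ~ (exists f g : strategy R 2 2, blackwell_nash (ex_game R) f g).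
Proof.
split=> [alpha a0 | [f [g [alpha0 [a0 nash]]]]].
  rewrite fstarE ?gstarE ?ltW //.
  by split=> [|f g]; [exact: ex_mix_nash | exact: ex_nash_unique].
have half0 : 0 < alpha0 / 2 by lra.
have half_lt : alpha0 / 2 < alpha0 by lra.
have [f_alpha0 _] := ex_nash_unique a0 (nash alpha0 a0 (lexx _)).
have [f_half _] := ex_nash_unique half0 (nash _ half0 (ltW half_lt)).
move: f_half; rewrite f_alpha0 => /ex_mix_inj/(ex_pstar_inj (ltW a0) (ltW half0)).
by move=> eq_half; move: half_lt; rewrite -eq_half ltxx.
Qed.
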